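(* Let $D\ge 1$, let $n_1,\dots,n_D$ and $l_1,\dots,l_D$ be positive integers with $n_d\ge l_d$ for all $d$, and let $\mathcal{M}\subseteq\mathbb{R}^{l_1\times\dots\times l_D}$ be a Tucker core structure. Then the set $$\mathcal{M}^{n_1,\dots,n_D}:=\{(U_1,\dots,U_D)\cdot\mathcal{C}\;:\;\mathcal{C}\in\mathcal{M},\ U_d\in\mathbb{R}^{n_d\times l_d}_\star\ (d=1,\dots,D)\}$$ of all tensors admitting an $\mathcal{M}$-structured Tucker decomposition is a smooth embedded submanifold of $\mathbb{R}^{n_1\times\dots\times n_D}$.
   Context: $\mathbb{R}^{n\times l}_\star$ ($n\ge l$) denotes the manifold of real $n\times l$ matrices of rank $l$. For matrices $U_d\in\mathbb{R}^{n_d\times l_d}$ and $\mathcal{C}=(c_{i_1\dots i_D})\in\mathbb{R}^{l_1\times\dots\times l_D}$, the multilinear multiplication is $(U_1,\dots,U_D)\cdot\mathcal{C}=(U_1\otimes\dots\otimes U_D)\mathcal{C}:=\sum_{i_1,\dots,i_D}c_{i_1\dots i_D}\,(U_1e_{i_1})\otimes\dots\otimes(U_De_{i_D})$. A Tucker core structure is a smooth submanifold $\mathcal{M}\subseteq\mathbb{R}^{l_1\times\dots\times l_D}$ such that (1) every $\mathcal{C}\in\mathcal{M}$ has multilinear rank $(l_1,\dots,l_D)$ (i.e. the $d$-th unfolding of $\mathcal{C}$ has rank $l_d$ for every $d$), and (2) $(A_1,\dots,A_D)\cdot\mathcal{C}\in\mathcal{M}$ for all $\mathcal{C}\in\mathcal{M}$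 and all $A_d\in\mathrm{GL}(l_d)$. *)

From mathcomp Require Import all_boot all_algebra.
From mathcomp Require Import all_classical all_reals all_analysis.
Import numFieldNormedType.Exports.
Set Implicit Arguments. Unset Strict Implicit. Unset Printing Implicit Defensive.
Local Open Scope ring_scope.
Local Open Scope classical_set_scope.

Section Defs.
Variable R : realType.

Definition pdiff (N m : nat) (s : seq 'I_N) (f : 'rV[R]_N -> 'rV[R]_m)
  : 'rV[R]_N -> 'rV[R]_m :=
  foldr (fun i g => fun x => 'D_('e_i) g x) f s.

Definition smooth_on (N m : nat) (U : set 'rV[R]_N)
  (f : 'rV[R]_N -> 'rV[R]_m) : Prop :=
  forall (s : seq 'I_N) (x : 'rV[R]_N), U x ->
    {for x, continuous (pdiff s f)} /\
    (forall i : 'I_N, derivable (pdiff s f) x 'e_i).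

(* Jacobian (transposed convention: row i = partial derivative along e_i) *)
Definition jacobian (N m : nat) (f : 'rV[R]_N -> 'rV[R]_m) (x : 'rV[R]_N)
  : 'M[R]_(N, m) :=
  \matrix_(i < N, j < m) ('D_('e_i) f x) ord0 j.

(* S is a smooth embedded submanifold of R^N: locally around each of its
   points it is the zero set of a smooth submersion (local defining
   function). The (co)dimension c may depend on the point. *)
Definition is_submanifold (N : nat) (S : set 'rV[R]_N) : Prop :=
  forall p, S p ->
    exists (c : nat) (U : set 'rV[R]_N) (F : 'rV[R]_N -> 'rV[R]_c),
      [/\ open U, U p, smooth_on U F,
          (forall x, U x -> \rank (jacobian F x) = c) &
          (forall x, U x -> (S x <-> F x = 0))].

Definition idx (D : nat) (l : 'I_D -> nat) : finType :=
  {dffun forall d : 'I_D, 'I_(l d)}.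

Definition tensor (D : nat) (l : 'I_D -> nat) := idx l -> R.

(* identification of R^{l_1 x ... x l_D} with R^N, N = #|idx l| *)
Definition is_submanifold_t (D : nat) (l : 'I_D -> nat)
  (S : set (tensor l)) : Prop :=
  is_submanifold [set v : 'rV[R]_#|idx l| |
                   S (fun k : idx l => v ord0 (enum_rank k))].

Definition upd (D : nat) (l : 'I_D -> nat) (k : idx l) (d : 'I_D)
  (i : 'I_(l d)) : idx l :=
  [ffun e => @dfwith _ (fun e => 'I_(l e)) (fun e => k e) d i e].

(* d-th unfolding: columns are all the mode-d fibers of C (each fiber
   repeated l_d times, which does not change the rank) *)
Definition unfolding (D : nat) (l : 'I_D -> nat) (C : tensor l) (d : 'I_D)
  : 'M[R]_(l d, #|idx l|) :=
  \matrix_(i < l d, j < #|idx l|) C (upd (enum_val j) i).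

Definition has_mlrank (D : nat) (l : 'I_D -> nat) (C : tensor l) : Prop :=
  forall d : 'I_D, \rank (unfolding C d) = l d.

Definition mlmul (D : nat) (n l : 'I_D -> nat)
  (U : forall d : 'I_D, 'M[R]_(n d, l d)) (C : tensor l) : tensor n :=
  fun j : idx n => \sum_(i : idx l) C i * \prod_(d < D) U d (j d) (i d).

Definition tucker_core_structure (D : nat) (l : 'I_D -> nat)
  (M : set (tensor l)) : Prop :=
  [/\ is_submanifold_t M,
      (forall C, M C -> has_mlrank C) &
      (forall (A : forall d : 'I_D, 'M[R]_(l d)) C,
          (forall d, A d \in unitmx) -> M C -> M (mlmul A C))].

Definition tucker_set (D : nat) (n l : 'I_D -> nat) (M : set (tensor l))
  : set (tensor n) :=
  [set T | exists (C : tensor l) (U : forall d : 'I_D, 'M[R]_(n d, l d)),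
             [/\ M C, (forall d, \rank (U d) = l d) & T = mlmul U C]].

End Defs.

From Pilot Require Import Defs.
From mathcomp Require Import all_boot all_algebra.
From mathcomp Require Import all_classical all_reals all_analysis.

(* Let p = (V_1, ..., V_D) . C, C in M, be a point of the Tucker set.  Choose
   rows I_d of V_d on which V_d is invertible; the subtensor p|_I on
   I = I_1 x ... x I_D is then (V_1|_I_1, ..., V_D|_I_D) . C, which lies in M
   and so has full multilinear rank, so one can also choose l_d mode-d fibres
   J_d of p|_I whose l_d x l_d cross matrices T_(d)(I_d, J_d) are invertible at
   T = p.  While they stay invertible, T is in the Tucker set iff T|_I is in M
   and T equals its cross approximation (F_1, ..., F_D) . T|_I with
   F_d = T_(d)(:, J_d) T_(d)(I_d, J_d)^-1, which is a smooth function of the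
   cross entries of T alone (those in I and in the fibres through J_d).  So
   near p the Tucker set is the zero set of a defining function of M applied
   to T|_I, together with the defects T_k - (cross approximation)_k at the
   remaining entries k.  Its Jacobian is block triangular, with the Jacobian of
   the defining function of M and an identity block on the diagonal, so it has
   full rank. *)

Local Open Scope ring_scope.

Import mathcomp.order.order.Order.TTheory GRing.Theory Num.Theory.
Import numFieldNormedType.Exports.
Set Implicit Arguments. Unset Strict Implicit. Unset Printing Implicit Defensive.

Local Open Scope classical_set_scope.

Lemma near_eq_continuous {T U : topologicalType} (f g : T -> U) x :
  {near x, f =1 g} -> {for x, continuous f} -> {for x, continuous g}.
Proof.
move=> fg cf; rewrite /prop_for /continuous_at -(nbhs_singleton fg).
exact: cvg_trans (near_eq_cvg fg) cf.
Qed.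

Lemma open_near_eq {T U : topologicalType} (A : set T) (f g : T -> U) x :
  open A -> (forall y, A y -> f y = g y) -> A x -> {near x, f =1 g}.
Proof. by move=> oA fg Ax; apply: filterS (open_nbhs_nbhs (conj oA Ax)) => y /fg. Qed.

Lemma derive_affine_line (R : realType) (V : normedModType R) (f : V -> R)
    (x v : V) (c : R) :
  (forall h : R, f (h *: v + x) = f x + h * c) ->
  derivable f x v /\ 'D_v f x = c.
Proof.
move=> fE.
have rate : \forall h \near (0 : R)^', h^-1 *: ((f \o shift x) (h *: v) - f x) = c.
  near=> h; rewrite /= fE addrC addKr /GRing.scale /= mulKf //.
  by near: h; exact: nbhs_dnbhs_neq.
split; first exact: is_cvg_near_cst rate.
by rewrite /derive; apply/lim_near_cst.
Unshelve. all: by end_near.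
Qed.

Lemma invmx_adj (R : comUnitRingType) p (A : 'M[R]_p) :
  A \in unitmx -> invmx A = (\det A)^-1 *: \adj A.
Proof. by rewrite /invmx => ->. Qed.

Section ScalarSmoothness.
Context {R : realType} {N : nat}.
Implicit Types (U V : set 'rV[R]_N) (f g : 'rV[R]_N -> R).

Definition partial (i : 'I_N) f x : R := 'D_('e_i) f x.

Fixpoint Ck_on U (k : nat) f : Prop :=
  (forall x, U x -> {for x, continuous f}) /\
  if k is k'.+1 then forall i : 'I_N,
    (forall x, U x -> derivable f x 'e_i) /\ Ck_on U k' (partial i f)
  else True.

Definition Cinf_on U f := forall k, Ck_on U k f.

Lemma Ck_on_continuous U k f x : Ck_on U k f -> U x -> {for x, continuous f}.
Proof. by case: k => [[]|k []] => cf _ /cf. Qed.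

Lemma Ck_on_derivable U k f i x : Ck_on U k.+1 f -> U x -> derivable f x 'e_i.
Proof. by move=> [_ /(_ i) [df _]] /df. Qed.

Lemma Ck_on_partial U k f i : Ck_on U k.+1 f -> Ck_on U k (partial i f).
Proof. by move=> [_ /(_ i) []]. Qed.

Lemma Ck_onW U k f : Ck_on U k.+1 f -> Ck_on U k f.
Proof.
elim: k f => [|k IH] f /= [cf df]; split=> // i.
by have [di /IH] := df i.
Qed.

Lemma Ck_onS U V k f : V `<=` U -> Ck_on U k f -> Ck_on V k f.
Proof.
move=> VU; elim: k f => [|k IH] f /= [cf df].
  by split=> // x /VU; exact: cf.
split=> [x /VU|i]; first exact: cf.
by have [di /IH] := df i; split=> // x /VU; exact: di.
Qed.

Lemma eq_Ck_on U k f g : open U -> (forall x, U x -> f x = g x) ->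
  Ck_on U k f -> Ck_on U k g.
Proof.
move=> oU; elim: k f g => [|k IH] f g fg [cf df].
all: split=> [x Ux|//]; first exact: near_eq_continuous (open_near_eq oU fg Ux) (cf x Ux).
move=> i; have [di Ddf] := df i; split=> [x Ux|].
  exact: near_eq_derivable (open_near_eq oU fg Ux) (di x Ux).
by apply: IH Ddf => x Ux; exact: near_eq_derive (open_near_eq oU fg Ux).
Qed.

Lemma Ck_on_cst U k (c : R) : Ck_on U k (fun=> c).
Proof.
elim: k c => [|k IH] c; (split; first by move=> x _; exact: cst_continuous) => // i.
split=> [x _|]; first exact: derivable_cst.
have -> : partial i (fun=> c) = fun=> 0 by apply: funext => x; exact: derive_cst.
exact: IH.
Qed.

Lemma Ck_on_coord U k (j : 'I_N) : Ck_on U k (fun x => x ord0 j).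
Proof.
case: k => [|k]; (split; first by move=> x _; exact: coord_continuous) => // i.
have line (x : 'rV[R]_N) h :
    (h *: 'e_i + x) ord0 j = x ord0 j + h * ('e_i : 'rV[R]_N) ord0 j.
  by rewrite !mxE addrC.
have coordD x := derive_affine_line (f := fun y : 'rV[R]_N => y ord0 j) (line x).
split=> [x _|]; first exact: (coordD x).1.
have -> : partial i (fun x => x ord0 j) = fun=> ('e_i : 'rV[R]_N) ord0 j.
  by apply: funext => x; exact: (coordD x).2.
exact: Ck_on_cst.
Qed.

Section CkAlgebra.
Variable U : set 'rV[R]_N.
Hypothesis oU : open U.

Lemma Ck_onD k f g : Ck_on U k f -> Ck_on U k g -> Ck_on U k (fun x => f x + g x).
Proof.
elim: k f g => [|k IH] f g [cf df] [cg dg].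
all: split=> [x Ux|//]; first exact: cvgD (cf x Ux) (cg x Ux).
move=> i; have [dfi Df] := df i; have [dgi Dg] := dg i; split.
  by move=> x Ux; exact: derivableD (dfi x Ux) (dgi x Ux).
apply: (eq_Ck_on (f := fun x => partial i f x + partial i g x) oU _ (IH _ _ Df Dg)).
by move=> x Ux; rewrite /partial (deriveD (dfi x Ux) (dgi x Ux)).
Qed.

Lemma Ck_onM k f g : Ck_on U k f -> Ck_on U k g -> Ck_on U k (fun x => f x * g x).
Proof.
elim: k f g => [|k IH] f g [cf df] [cg dg].
all: split=> [x Ux|//]; first exact: cvgM (cf x Ux) (cg x Ux).
move=> i; have [dfi Df] := df i; have [dgi Dg] := dg i; split.
  by move=> x Ux; exact: derivableM (dfi x Ux) (dgi x Ux).
apply: (eq_Ck_on (f := fun x => f x * partial i g x + g x * partial i f x) oU).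
  by move=> x Ux; rewrite /partial (deriveM (dfi x Ux) (dgi x Ux)).
by apply: Ck_onD; apply: IH => //; apply: Ck_onW; split.
Qed.

Lemma Ck_onN k f : Ck_on U k f -> Ck_on U k (fun x => - f x).
Proof.
have -> : (fun x => - f x) = (fun x => -1 * f x) by apply: funext => x; rewrite mulN1r.
exact: Ck_onM (Ck_on_cst _ _ _).
Qed.

Lemma Ck_onV k f : (forall x, U x -> f x != 0) ->
  Ck_on U k f -> Ck_on U k (fun x => (f x)^-1).
Proof.
move=> f_neq0; elim: k f f_neq0 => [|k IH] f f_neq0 [cf df].
all: split=> [x Ux|//]; first exact: cvgV (f_neq0 x Ux) (cf x Ux).
move=> i; have [dfi Df] := df i; split.
  by move=> x Ux; exact: derivableV (f_neq0 x Ux) (dfi x Ux).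
apply: (eq_Ck_on (f := fun x => - ((f x)^-1 * (f x)^-1) * partial i f x) oU).
  move=> x Ux; rewrite /partial (deriveV (f_neq0 x Ux) (dfi x Ux)).
  by rewrite /GRing.scale /= -invfM -expr2.
have Cf : Ck_on U k f by apply: Ck_onW; split.
by apply: Ck_onM => //; apply: Ck_onN; apply: Ck_onM; exact: IH.
Qed.

Lemma Ck_on_sum k (I : Type) (r : seq I) (P : pred I) (F : I -> 'rV[R]_N -> R) :
  (forall i, P i -> Ck_on U k (F i)) ->
  Ck_on U k (fun x => \sum_(i <- r | P i) F i x).
Proof.
move=> CF; elim: r => [|a r IH].
  under [fun x => _]funext do rewrite big_nil.
  exact: Ck_on_cst.
under [fun x => _]funext do rewrite big_cons.
by case: (boolP (P a)) => Pa //; exact: Ck_onD (CF a Pa) IH.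
Qed.

Lemma Ck_on_prod k (I : Type) (r : seq I) (P : pred I) (F : I -> 'rV[R]_N -> R) :
  (forall i, P i -> Ck_on U k (F i)) ->
  Ck_on U k (fun x => \prod_(i <- r | P i) F i x).
Proof.
move=> CF; elim: r => [|a r IH].
  under [fun x => _]funext do rewrite big_nil.
  exact: Ck_on_cst.
under [fun x => _]funext do rewrite big_cons.
by case: (boolP (P a)) => Pa //; exact: Ck_onM (CF a Pa) IH.
Qed.

Lemma Ck_on_det k p (A : 'rV[R]_N -> 'M[R]_p) :
  (forall a b, Ck_on U k (fun x => A x a b)) -> Ck_on U k (fun x => \det (A x)).
Proof.
move=> CA; apply: Ck_on_sum => s _; apply: Ck_onM; first exact: Ck_on_cst.
by apply: Ck_on_prod => i _; exact: CA.
Qed.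

Lemma Ck_on_adj k p (A : 'rV[R]_N -> 'M[R]_p) i j :
  (forall a b, Ck_on U k (fun x => A x a b)) -> Ck_on U k (fun x => \adj (A x) i j).
Proof.
move=> CA; under [fun x => _]funext do rewrite mxE.
apply: Ck_onM; first exact: Ck_on_cst.
by apply: Ck_on_det => a b; under [fun x => _]funext do rewrite !mxE; exact: CA.
Qed.

Lemma Ck_on_invmx k p (A : 'rV[R]_N -> 'M[R]_p) i j :
  (forall x, U x -> A x \in unitmx) ->
  (forall a b, Ck_on U k (fun x => A x a b)) ->
  Ck_on U k (fun x => invmx (A x) i j).
Proof.
move=> A_unit CA.
apply: (eq_Ck_on (f := fun x => (\det (A x))^-1 * \adj (A x) i j) oU).
  by move=> x Ux; rewrite (invmx_adj (A_unit x Ux)) [RHS]mxE.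
apply: Ck_onM; last exact: Ck_on_adj.
apply: Ck_onV; last exact: Ck_on_det.
by move=> x /A_unit; rewrite unitmxE unitfE.
Qed.

End CkAlgebra.

End ScalarSmoothness.

Section EntrywiseSmoothness.
Context {R : realType}.

Lemma cvg_mx_entries {T : Type} (F : set_system T) {FF : Filter F} m n
    (f : T -> 'M[R]_(m, n)) (L : 'M[R]_(m, n)) :
  (forall i j, (fun y => f y i j) @ F --> L i j) -> f @ F --> L.
Proof.
move=> fL; apply/cvgrPdist_le => /= e e0; near=> x.
rewrite /Num.Def.normr /= mx_normrE (bigmax_le _ (ltW e0)) //= => i _.
rewrite !mxE /=; move: i; near: x; apply: filter_forall => /= i.
exact: ((cvgrPdist_le _ _).1 (fL i.1 i.2)).
Unshelve. all: by end_near.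
Qed.

Lemma continuous_mx_entries N m n (f : 'rV[R]_N -> 'M[R]_(m, n)) x :
  (forall i j, {for x, continuous (fun y => f y i j)}) -> {for x, continuous f}.
Proof. by move=> cf; apply: (cvg_mx_entries (FF := nbhs_filter x)) => i j; exact: cf. Qed.

Definition partials N (s : seq 'I_N) (g : 'rV[R]_N -> R) := foldr partial g s.

Lemma Cinf_on_partials N (U : set 'rV[R]_N) s g : Cinf_on U g -> Cinf_on U (partials s g).
Proof. by elim: s => [//|i s IH] Cg k; exact: Ck_on_partial (IH Cg k.+1). Qed.

Lemma jacobianE N m (F : 'rV[R]_N -> 'rV[R]_m) x i j : derivable F x 'e_i ->
  Defs.jacobian F x i j = 'D_('e_i) (fun y => F y ord0 j) x.
Proof. by move=> dF; rewrite mxE (derive_mx dF) mxE. Qed.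

Section SmoothOnEntries.
Variables (N m : nat) (U : set 'rV[R]_N) (F : 'rV[R]_N -> 'rV[R]_m).
Hypothesis oU : open U.
Let F_ j x := F x ord0 j.

Lemma pdiff_entries s : (forall j, Cinf_on U (F_ j)) ->
  (forall x, U x -> forall j, pdiff s F x ord0 j = partials s (F_ j) x) /\
  (forall x i, U x -> derivable (pdiff s F) x 'e_i).
Proof.
move=> CF; elim: s => [|i s [IHe IHd]].
  split=> // x i Ux; apply/derivable_mxP => a b; rewrite (ord1 a).
  exact: Ck_on_derivable (CF b 1%N) Ux.
have E x : U x -> forall j, pdiff (i :: s) F x ord0 j = partials (i :: s) (F_ j) x.
  move=> Ux j; rewrite /= (derive_mx (IHd x i Ux)) mxE.
  exact: near_eq_derive (open_near_eq oU (fun y Uy => IHe y Uy j) Ux).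
split=> // x i' Ux; apply/derivable_mxP => a b; rewrite (ord1 a).
apply: (near_eq_derivable (f := partials (i :: s) (F_ b))).
  by apply: open_near_eq oU _ Ux => y Uy; rewrite E.
exact: Ck_on_derivable (Cinf_on_partials (i :: s) (CF b) 1%N) Ux.
Qed.

Lemma smooth_on_Cinf_entries : smooth_on U F -> forall j, Cinf_on U (F_ j).
Proof.
move=> sF j k; suff Cs s : Ck_on U k (fun x => pdiff s F x ord0 j) by exact: Cs [::].
elim: k s => [|k IH] s.
all: split=> [x Ux|//];
  first exact: continuous_comp (sF s x Ux).1 (@coord_continuous R 1 m ord0 j _).
move=> i; split=> [x Ux|]; first exact: ((derivable_mxP _ _ _).1 ((sF s x Ux).2 i) ord0 j).
apply: (eq_Ck_on (f := fun x => pdiff (i :: s) F x ord0 j) oU _ (IH _)).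
by move=> x Ux; rewrite /= (derive_mx ((sF s x Ux).2 i)) mxE.
Qed.

Lemma Cinf_entries_smooth_on : (forall j, Cinf_on U (F_ j)) -> smooth_on U F.
Proof.
move=> CF s x Ux; have [E D] := pdiff_entries s CF; split=> [|i]; last exact: D.
apply: continuous_mx_entries => a b; rewrite (ord1 a).
apply: (near_eq_continuous (f := partials s (F_ b))).
  by apply: open_near_eq oU _ Ux => y Uy; rewrite E.
exact: Ck_on_continuous (Cinf_on_partials s (CF b) 0%N) Ux.
Qed.

End SmoothOnEntries.

Section Colsub.
Variables (N N' : nat) (rho : 'I_N' -> 'I_N).
Implicit Types (x v : 'rV[R]_N) (g : 'rV[R]_N' -> R).

Lemma colsub_affine (h : R) v x :
  colsub rho (h *: v + x) = h *: colsub rho v + colsub rho x.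
Proof. by apply/rowP => a; rewrite !mxE. Qed.

Lemma continuous_colsub : continuous (colsub rho : 'rV[R]_N -> 'rV[R]_N').
Proof.
move=> x; apply: continuous_mx_entries => a b.
have -> : (fun y : 'rV[R]_N => colsub rho y a b) = fun y => y ord0 (rho b).
  by apply: funext => y; rewrite mxE (ord1 a).
exact: coord_continuous.
Qed.

Let rate_colsub g x v :
  (fun h : R => h^-1 *: (((g \o colsub rho) \o shift x) (h *: v) - g (colsub rho x))) =
  (fun h : R =>
     h^-1 *: ((g \o shift (colsub rho x)) (h *: colsub rho v) - g (colsub rho x))).
Proof. by apply: funext => h; rewrite /= colsub_affine. Qed.

Lemma derive_colsub g x v : 'D_v (g \o colsub rho) x = 'D_(colsub rho v) g (colsub rho x).
Proof. by rewrite /derive rate_colsub. Qed.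

Lemma derivable_colsub g x v :
  derivable g (colsub rho x) (colsub rho v) -> derivable (g \o colsub rho) x v.
Proof. by rewrite /derivable rate_colsub. Qed.

Lemma colsub_delta (a : 'I_N') : injective rho ->
  colsub rho ('e_(rho a) : 'rV[R]_N) = 'e_a.
Proof. by move=> rho_inj; apply/rowP => b; rewrite !mxE eqxx (inj_eq rho_inj). Qed.

Lemma colsub_delta0 (i : 'I_N) : (forall a, rho a != i) ->
  colsub rho ('e_i : 'rV[R]_N) = 0.
Proof. by move=> out_i; apply/rowP => b; rewrite !mxE eqxx (negbTE (out_i b)). Qed.

Lemma Ck_on_colsub (U : set 'rV[R]_N') k g : injective rho ->
  Ck_on U k g -> Ck_on (colsub rho @^-1` U) k (g \o colsub rho).
Proof.
move=> rho_inj; elim: k g => [|k IH] g [cg dg].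
all: split=> [x Ux|//]; first exact: continuous_comp (@continuous_colsub x) (cg _ Ux).
move=> i; case: (pickP (fun a => rho a == i)) => [a /eqP <-|out_i].
  have ea := colsub_delta a rho_inj.
  have [dga Dg] := dg a; split.
    by move=> x Ux; apply: derivable_colsub; rewrite ea; exact: dga.
  have -> : partial (rho a) (g \o colsub rho) = partial a g \o colsub rho.
    by apply: funext => x; rewrite /partial /= derive_colsub ea.
  exact: IH.
have e0 : colsub rho ('e_i : 'rV[R]_N) = 0 by apply: colsub_delta0 => a; rewrite out_i.
split=> [x _|]; first by apply: derivable_colsub; rewrite e0; exact: derivable0.
have -> : partial i (g \o colsub rho) = fun=> 0.
  by apply: funext => x; rewrite /partial /= derive_colsub e0 derive0.
exact: Ck_on_cst.
Qed.

End Colsub.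

End EntrywiseSmoothness.

Lemma sum_idx_prod (R : comPzSemiRingType) D (l : 'I_D -> nat)
    (F : forall d : 'I_D, 'I_(l d) -> R) :
  \sum_(i : idx l) \prod_(d < D) F d (i d) = \prod_(d < D) \sum_(b : 'I_(l d)) F d b.
Proof.
pose T_ : 'I_D -> finType := fun d => 'I_(l d).
pose P_ d := [ffun b : T_ d => F d b].
rewrite (reindex (@dffun_of_fprod _ T_)); last exact/onW_bij/dffun_of_fprod_bij.
under eq_bigr do under eq_bigr do rewrite ffunE.
transitivity (\sum_(t : fprod T_) \prod_(i in 'I_D) P_ i (t i)).
  by apply: eq_bigr => t _; apply: eq_bigr => i _; rewrite ffunE.
rewrite (@big_fprod R 0 1 *%R +%R 'I_D T_ P_).
rewrite -(bigA_distr_big_dep (tagged_with T_) (fun i j => untag 0 (P_ i) j)).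
apply: eq_bigr => d _.
rewrite [RHS](_ : _ = \sum_(b : T_ d) P_ d b); last by apply: eq_bigr => b _; rewrite ffunE.
by rewrite (big_tag (fun d b => P_ d b) d); apply: eq_bigl.
Qed.

Section MultiIndex.
Context {D : nat} {l : 'I_D -> nat}.
Implicit Types (i k : idx l).

Lemma upd_eq k d (a : 'I_(l d)) : upd k a d = a.
Proof. by rewrite /upd ffunE dfwithin. Qed.

Lemma upd_neq k d (a : 'I_(l d)) e : e != d -> upd k a e = k e.
Proof. by rewrite eq_sym => ne; rewrite /upd ffunE dfwithout. Qed.

Lemma idx_neq i k : i != k -> exists d, i d != k d.
Proof.
move=> ne; case: (pickP (fun d => i d != k d)) => [d nd|eq_ik]; first by exists d.
by case/eqP: ne; apply/ffunP => d; apply/eqP/negbFE/eq_ik.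
Qed.

Lemma sum_upd {R : comPzSemiRingType} (f : idx l -> R) e k :
  \sum_i f i * \prod_(d | d != e) (k d == i d)%:R = \sum_(b : 'I_(l e)) f (upd k b).
Proof.
rewrite (partition_big (fun i : idx l => i e) xpredT) //=; apply: eq_bigr => b _.
rewrite (bigD1 (upd k b)) ?upd_eq //= big1 ?mulr1 => [|d nde]; last first.
  by rewrite upd_neq // eqxx.
rewrite big1 ?addr0 // => i /andP[/eqP ie ne]; have [d nd] := idx_neq ne.
have nde : d != e by apply: contraNneq nd => ->; rewrite ie upd_eq.
move: nd; rewrite upd_neq // eq_sym => /negbTE nd.
by rewrite (bigD1 d) //= nd mul0r mulr0.
Qed.

End MultiIndex.

Section MultilinearMultiplication.
Context {R : realType} {D : nat} {n l : 'I_D -> nat}.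

Lemma eq_mlmul (U V : forall d, 'M[R]_(n d, l d)) (C : tensor R l) :
  (forall d, U d = V d) -> mlmul U C = mlmul V C.
Proof. by move=> UV; congr mlmul; apply: functional_extensionality_dep. Qed.

Lemma mlmul_mulmx (U : forall d, 'M[R]_(n d, l d)) (A : forall d, 'M[R]_(l d))
    (C : tensor R l) :
  mlmul U (mlmul A C) = mlmul (fun d => U d *m A d) C.
Proof.
apply: funext => k; rewrite /mlmul.
under eq_bigr do rewrite mulr_suml.
rewrite exchange_big /=; apply: eq_bigr => j _.
transitivity (C j * \sum_(i : idx l) \prod_(d < D) (U d (k d) (i d) * A d (i d) (j d))).
  rewrite mulr_sumr; apply: eq_bigr => i _.
  by rewrite big_split /= -mulrA; congr (_ * _); exact: mulrC.
rewrite (sum_idx_prod (fun d b => U d (k d) b * A d b (j d))).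
by congr (_ * _); apply: eq_bigr => d _; rewrite mxE.
Qed.

End MultilinearMultiplication.

Section CrossApproximation.
Context {R : realType} {D : nat} {n l : 'I_D -> nat}.
(* Implicit arguments are switched off here so that [d] stays explicit in
   [rows d] and [fibres d]; [fibres d j] is a multi-index on the j-th chosen
   mode-d fibre. *)
Unset Implicit Arguments.
Variables (rows : forall d, 'I_(l d) -> 'I_(n d)) (fibres : forall d, 'I_(l d) -> idx l).
Set Implicit Arguments.
Implicit Types (T : tensor R n) (C : tensor R l) (V : forall d, 'M[R]_(n d, l d)).

Definition sel_idx (k : idx l) : idx n :=
  @finfun _ (fun d => 'I_(n d)) (fun d => rows d (k d)).

Lemma sel_idxE k d : sel_idx k d = rows d (k d).
Proof. by rewrite ffunE. Qed.

Lemma sel_idx_inj : (forall d, injective (rows d)) -> injective sel_idx.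
Proof.
move=> rows_inj a b /ffunP eq_ab; apply/ffunP => d; apply: (rows_inj d).
by have := eq_ab d; rewrite !sel_idxE.
Qed.

Lemma upd_sel_idx k d (a : 'I_(l d)) : upd (sel_idx k) (rows d a) = sel_idx (upd k a).
Proof.
apply/ffunP => e; have [<-|ne] := eqVneq d e; first by rewrite sel_idxE !upd_eq.
by rewrite sel_idxE !upd_neq 1?eq_sym // sel_idxE.
Qed.

Definition subtensor T : tensor R l := fun k => T (sel_idx k).

Definition fibre_mx T d : 'M[R]_(n d, l d) :=
  \matrix_(r, j) T (upd (sel_idx (fibres d j)) r).

Definition cross_mx T d : 'M[R]_(l d) := rowsub (rows d) (fibre_mx T d).

Definition factor_mx T d : 'M[R]_(n d, l d) := fibre_mx T d *m invmx (cross_mx T d).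

(* In the notation of the cross approximation (F_1, ..., F_D) . T|_I with
   F_d = T_(d)(:, J_d) T_(d)(I_d, J_d)^-1: [subtensor T] is T|_I, [fibre_mx T d]
   is T_(d)(:, J_d), [cross_mx T d] is T_(d)(I_d, J_d), [factor_mx T d] is F_d. *)
Definition cross_approx T : tensor R n := mlmul (factor_mx T) (subtensor T).

Definition cross_entry (k : idx n) : bool :=
  [exists a, k == sel_idx a] ||
  [exists d, [exists j, [exists r : 'I_(n d), k == upd (sel_idx (fibres d j)) r]]].

Lemma cross_mxE T d a j : cross_mx T d a j = T (sel_idx (upd (fibres d j) a)).
Proof. by rewrite !mxE upd_sel_idx. Qed.

Lemma rowsub_factor_mx T d : cross_mx T d \in unitmx ->
  rowsub (rows d) (factor_mx T d) = 1%:M.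
Proof. by move=> uB; rewrite -mul_rowsub_mx mulmxV. Qed.

Lemma factor_mx_sel T d a b : cross_mx T d \in unitmx ->
  factor_mx T d (rows d a) b = (a == b)%:R.
Proof. by move=> /rowsub_factor_mx /matrixP /(_ a b); rewrite !mxE. Qed.

Lemma rank_factor_mx T d : cross_mx T d \in unitmx -> \rank (factor_mx T d) = l d.
Proof.
move=> uB; apply/eqP; rewrite eqn_leq rank_leq_col /=.
have := mxrankM_maxr (rowsub (rows d) 1%:M) (factor_mx T d).
by rewrite -rowsubE rowsub_factor_mx // mxrank1.
Qed.

Section InvertibleCross.
Variable T : tensor R n.
Hypothesis cross_unit : forall d, cross_mx T d \in unitmx.

Lemma cross_approx_sel k : cross_approx T (sel_idx k) = T (sel_idx k).
Proof.
rewrite /cross_approx /mlmul.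
transitivity (\sum_i subtensor T i * \prod_d (k d == i d)%:R).
  apply: eq_bigr => i _; congr (_ * _); apply: eq_bigr => d _.
  by rewrite sel_idxE factor_mx_sel.
rewrite (bigD1 k) //= big1 ?mulr1 => [|d _]; last by rewrite eqxx.
rewrite big1 ?addr0 // => i ne; have [d nd] := idx_neq ne.
by rewrite (bigD1 d) //= eq_sym (negbTE nd) mul0r mulr0.
Qed.

Lemma cross_approx_fibre e j (r : 'I_(n e)) :
  cross_approx T (upd (sel_idx (fibres e j)) r) = T (upd (sel_idx (fibres e j)) r).
Proof.
rewrite /cross_approx /mlmul.
transitivity (\sum_i (subtensor T i * factor_mx T e r (i e)) *
                     \prod_(d | d != e) (fibres e j d == i d)%:R).
  apply: eq_bigr => i _; rewrite -mulrA (bigD1 e) //= upd_eq; congr (_ * (_ * _)).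
  by apply: eq_bigr => d nde; rewrite upd_neq // sel_idxE factor_mx_sel.
rewrite (sum_upd (fun i => subtensor T i * factor_mx T e r (i e))).
have := mulmxKV (cross_unit e) (fibre_mx T e).
move=> /matrixP /(_ r j); rewrite [RHS]mxE => <-; rewrite mxE.
by apply: eq_bigr => b _; rewrite upd_eq cross_mxE mulrC.
Qed.

Lemma cross_approx_entry k : cross_entry k -> cross_approx T k = T k.
Proof.
case/orP => [/existsP[a /eqP ->]|/existsP[d /existsP[j /existsP[r /eqP ->]]]].
  exact: cross_approx_sel.
exact: cross_approx_fibre.
Qed.

End InvertibleCross.

Lemma eq_cross_approx T T' : (forall k, cross_entry k -> T k = T' k) ->
  cross_approx T = cross_approx T'.
Proof.
move=> TT'.
have eq_sub : subtensor T = subtensor T'.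
  by apply: funext => a; apply: TT'; apply/orP; left; apply/existsP; exists a.
have eq_fibre d : fibre_mx T d = fibre_mx T' d.
  apply/matrixP => r j; rewrite !mxE; apply: TT'; apply/orP; right.
  by apply/existsP; exists d; apply/existsP; exists j; apply/existsP; exists r.
rewrite /cross_approx eq_sub; congr mlmul; apply: functional_extensionality_dep => d.
by rewrite /factor_mx /cross_mx eq_fibre.
Qed.

Definition fibre_coef V C d : 'M[R]_(l d) :=
  \matrix_(b, j) \sum_(i : idx l | i d == b)
    C i * \prod_(e | e != d) V e (rows e (fibres d j e)) (i e).

Lemma fibre_mx_mlmul V C d : fibre_mx (mlmul V C) d = V d *m fibre_coef V C d.
Proof.
apply/matrixP => r j; rewrite !mxE /mlmul (partition_big (fun i : idx l => i d) xpredT) //=.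
apply: eq_bigr => b _; rewrite mxE mulr_sumr; apply: eq_bigr => i /eqP <-.
rewrite (bigD1 d) //= upd_eq mulrCA; congr (_ * (_ * _)).
by apply: eq_bigr => e ne; rewrite upd_neq // sel_idxE.
Qed.

Lemma subtensor_mlmul V C :
  subtensor (mlmul V C) = mlmul (fun d => rowsub (rows d) (V d)) C.
Proof.
apply: funext => k; apply: eq_bigr => i _; congr (_ * _).
by apply: eq_bigr => d _; rewrite sel_idxE mxE.
Qed.

Lemma cross_mx_mlmul V C d :
  cross_mx (mlmul V C) d = rowsub (rows d) (V d) *m fibre_coef V C d.
Proof. by rewrite /cross_mx fibre_mx_mlmul mul_rowsub_mx. Qed.

Lemma cross_approx_mlmul V C : (forall d, cross_mx (mlmul V C) d \in unitmx) ->
  cross_approx (mlmul V C) = mlmul V C.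
Proof.
move=> cross_unit; rewrite /cross_approx subtensor_mlmul mlmul_mulmx.
apply: eq_mlmul => d; have := cross_unit d; rewrite cross_mx_mlmul unitmx_mul.
case/andP=> _ uX; have := mulmxKV (cross_unit d) (fibre_mx (mlmul V C) d).
rewrite -/(factor_mx _ d) cross_mx_mlmul fibre_mx_mlmul mulmxA.
by move/(canRL (mulmxK uX)); rewrite mulmxK.
Qed.

End CrossApproximation.

Section TuckerSetLocally.
Context {R : realType} {D : nat} {n l : 'I_D -> nat} (M : set (tensor R l)).
Hypothesis M_invariant : forall (A : forall d, 'M[R]_(l d)) C,
  (forall d, A d \in unitmx) -> M C -> M (mlmul A C).

Lemma tucker_set_crossP rows fibres (T : tensor R n) :
  (forall d, cross_mx rows fibres T d \in unitmx) ->
  tucker_set M T <-> M (subtensor rows T) /\ cross_approx rows fibres T = T.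
Proof.
move=> cross_unit; split=> [[C [V [MC _ eqT]]]|[M_sub fixT]].
  rewrite eqT in cross_unit *; split; last exact: cross_approx_mlmul.
  rewrite subtensor_mlmul; apply: M_invariant => // d.
  by have := cross_unit d; rewrite cross_mx_mlmul unitmx_mul => /andP[].
exists (subtensor rows T), (factor_mx rows fibres T); split=> // d.
exact: rank_factor_mx.
Qed.

Lemma exists_invertible_cross (T : tensor R n) :
  (forall C, M C -> has_mlrank C) -> tucker_set M T ->
  exists (rows : forall d, 'I_(l d) -> 'I_(n d)) (fibres : forall d, 'I_(l d) -> idx l),
    (forall d, injective (rows d)) /\
                 (forall d, cross_mx rows fibres T d \in unitmx).
Proof.
move=> M_rank [C [V [MC rkV eqT]]].
have V_full d : row_full (V d) by rewrite /row_full rkV.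
pose rows d : 'I_(l d) -> 'I_(n d) := fullrankfun (V_full d).
have M_sub : M (subtensor rows T).
  rewrite eqT subtensor_mlmul; apply: M_invariant => // d.
  exact: fullrowsub_unit.
have unfold_full d : row_full (unfolding (subtensor rows T) d)^T.
  by rewrite /row_full mxrank_tr M_rank.
pose fibres d j := enum_val (fullrankfun (unfold_full d) j).
exists rows, fibres; split=> [d|d]; first exact: fullrankfun_inj.
have -> : cross_mx rows fibres T d =
          (rowsub (fullrankfun (unfold_full d)) (unfolding (subtensor rows T) d)^T)^T.
  by apply/matrixP => a j; rewrite cross_mxE !mxE.
by rewrite unitmx_tr; exact: fullrowsub_unit.
Qed.

End TuckerSetLocally.

Lemma rank_rowsub_triangular (F : fieldType) N N1 c m (J : 'M[F]_(N, c + m))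
    (rho : 'I_N1 -> 'I_N) (dep : 'I_m -> 'I_N) :
  \rank (lsubmx (rowsub rho J)) = c -> rowsub dep J = row_mx 0 1%:M ->
  \rank J = (c + m)%N.
Proof.
move=> rkL eqJdep; apply/eqP; rewrite eqn_leq rank_leq_col /=.
set X := rsubmx (rowsub rho J).
have elim_rows : col_mx (rowsub rho J - X *m rowsub dep J) (rowsub dep J) =
                 block_mx (lsubmx (rowsub rho J)) 0 0 1%:M.
  rewrite block_mxEv eqJdep mul_mx_row mulmx0 mulmx1.
  by rewrite -[rowsub rho J]hsubmxK opp_row_mx add_row_mx subr0 subrr row_mxKl.
have := mxrankM_maxr (col_mx (rowsub rho 1%:M - X *m rowsub dep 1%:M) (rowsub dep 1%:M)) J.
by rewrite mul_col_mx mulmxBl -mulmxA -!rowsubE elim_rows rank_diag_block_mx mxrank1 rkL.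
Qed.

Definition row_tensor (R : realType) D (l : 'I_D -> nat) (x : 'rV[R]_#|idx l|) :
  tensor R l := fun k => x ord0 (enum_rank k).

Section DefiningMap.
Context {R : realType} {D : nat} {n l : 'I_D -> nat}.
Unset Implicit Arguments.
Variables (rows : forall d, 'I_(l d) -> 'I_(n d)) (fibres : forall d, 'I_(l d) -> idx l).
Set Implicit Arguments.
Hypothesis rows_inj : forall d, injective (rows d).

Local Notation Nn := #|idx n|.
Local Notation Nl := #|idx l|.
Local Notation cross_unit x := (forall d, cross_mx rows fibres (row_tensor x) d \in unitmx).
Implicit Types (x : 'rV[R]_Nn) (U : set 'rV[R]_Nn).

Definition core_pos (a : 'I_Nl) : 'I_Nn := enum_rank (sel_idx rows (enum_val a)).

Lemma core_pos_inj : injective core_pos.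
Proof. by move=> a b /enum_rank_inj /(sel_idx_inj rows_inj) /enum_val_inj. Qed.

Lemma row_tensor_core x : row_tensor (colsub core_pos x) = subtensor rows (row_tensor x).
Proof. by apply: funext => k; rewrite /row_tensor mxE /core_pos enum_rankK. Qed.

Definition cross_det x : R := \prod_d \det (cross_mx rows fibres (row_tensor x) d).

Lemma cross_det_neq0 x : cross_det x != 0 -> cross_unit x.
Proof. by move=> /prodf_neq0 det_neq0 d; rewrite unitmxE unitfE det_neq0. Qed.

Definition noncross_pos : {set 'I_Nn} := [set i | ~~ cross_entry rows fibres (enum_val i)].

Local Notation m := #|noncross_pos|.

Definition cross_defect (q : 'I_m) x : R :=
  x ord0 (enum_val q) - cross_approx rows fibres (row_tensor x) (enum_val (enum_val q)).

Lemma noncross_pos_entry (q : 'I_m) k :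
  cross_entry rows fibres k -> enum_rank k != enum_val q.
Proof.
move=> entry_k; apply: contraTneq (enum_valP q) => <-.
by rewrite inE enum_rankK entry_k.
Qed.

Lemma core_pos_noncross (q : 'I_m) a : core_pos a != enum_val q.
Proof.
by apply: noncross_pos_entry; apply/orP; left; apply/existsP; exists (enum_val a).
Qed.

Lemma cross_defect_affine q q' x (h : R) :
  cross_defect q (h *: 'e_(enum_val q') + x) = cross_defect q x + h * (q == q')%:R.
Proof.
rewrite /cross_defect.
have -> : cross_approx rows fibres (row_tensor (h *: 'e_(enum_val q') + x)) =
          cross_approx rows fibres (row_tensor x).
  apply: eq_cross_approx => k entry_k; rewrite /row_tensor !mxE.
  by rewrite (negbTE (noncross_pos_entry q' entry_k)) andbF mulr0 add0r.
rewrite !mxE eqxx /= (inj_eq enum_val_inj).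
by rewrite -addrA addrC.
Qed.

Lemma cross_defect_eq0 x : cross_unit x ->
  (forall q, cross_defect q x = 0) <->
  cross_approx rows fibres (row_tensor x) = row_tensor x.
Proof.
move=> x_unit; split=> [defect0|fix_x q]; last first.
  by rewrite /cross_defect fix_x /row_tensor enum_valK subrr.
apply: funext => k; have [entry_k|not_entry_k] := boolP (cross_entry rows fibres k).
  exact: cross_approx_entry.
have k_noncross : enum_rank k \in noncross_pos by rewrite inE enum_rankK.
have /eqP := defect0 (enum_rank_in k_noncross (enum_rank k)).
by rewrite /cross_defect enum_rankK_in // enum_rankK subr_eq0 => /eqP.
Qed.

Section Smoothness.
Variables (U : set 'rV[R]_Nn) (k : nat).
Hypothesis oU : open U.

Lemma Ck_on_cross_mx d a b : Ck_on U k (fun x => cross_mx rows fibres (row_tensor x) d a b).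
Proof. by under [fun x => _]funext do rewrite cross_mxE; exact: Ck_on_coord. Qed.

Lemma Ck_on_cross_det : Ck_on U k cross_det.
Proof.
apply: Ck_on_prod => // d _; apply: Ck_on_det => // a b; exact: Ck_on_cross_mx.
Qed.

Lemma Ck_on_cross_approx (kk : idx n) : (forall x, U x -> cross_unit x) ->
  Ck_on U k (fun x => cross_approx rows fibres (row_tensor x) kk).
Proof.
move=> U_unit; apply: Ck_on_sum => // i _; apply: Ck_onM => //; first exact: Ck_on_coord.
apply: Ck_on_prod => // d _; under [fun x => _]funext do rewrite mxE.
apply: Ck_on_sum => // j _; apply: Ck_onM => //.
  by under [fun x => _]funext do rewrite mxE; exact: Ck_on_coord.
apply: Ck_on_invmx => // [x Ux|a b]; first exact: U_unit.
exact: Ck_on_cross_mx.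
Qed.

End Smoothness.

Section Chart.
Variables (M : set (tensor R l)) (c : nat).
Variables (UM : set 'rV[R]_Nl) (FM : 'rV[R]_Nl -> 'rV[R]_c).
Hypotheses (oUM : open UM) (sFM : smooth_on UM FM).
Hypothesis FM_rank : forall y, UM y -> \rank (Defs.jacobian FM y) = c.
Hypothesis FM_zero : forall y, UM y -> (M (row_tensor y) <-> FM y = 0).
Hypothesis M_invariant : forall (A : forall d, 'M[R]_(l d)) C,
  (forall d, A d \in unitmx) -> M C -> M (mlmul A C).

Definition chart_dom : set 'rV[R]_Nn :=
  (colsub core_pos @^-1` UM) `&` (cross_det @^-1` [set r | r != 0]).

Definition defining_map x : 'rV[R]_(c + m) :=
  row_mx (FM (colsub core_pos x)) (\row_q cross_defect q x).

Lemma open_chart_dom : open chart_dom.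
Proof.
apply: openI; first by apply: open_comp => // x _; exact: continuous_colsub.
apply: open_comp; last exact: open_neq.
by move=> x _; exact: Ck_on_continuous (Ck_on_cross_det 0 openT) (I : setT x).
Qed.

Lemma chart_dom_unit x : chart_dom x -> cross_unit x.
Proof. by case=> _; exact: cross_det_neq0. Qed.

Lemma defining_mapE_core x b :
  defining_map x ord0 (lshift m b) = FM (colsub core_pos x) ord0 b.
Proof. by rewrite row_mxEl. Qed.

Lemma defining_mapE_dep x q : defining_map x ord0 (rshift c q) = cross_defect q x.
Proof. by rewrite row_mxEr mxE. Qed.

Lemma smooth_defining_map : smooth_on chart_dom defining_map.
Proof.
have oD := open_chart_dom.
apply: (Cinf_entries_smooth_on oD) => j; case: (split_ordP j) => [b ->|q ->] k.
  under [fun x => _]funext do rewrite defining_mapE_core.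
  apply: (Ck_onS (U := colsub core_pos @^-1` UM)); first by move=> x [].
  apply: (Ck_on_colsub (g := fun y => FM y ord0 b)) core_pos_inj _.
  exact: smooth_on_Cinf_entries oUM sFM b k.
under [fun x => _]funext do rewrite defining_mapE_dep /cross_defect.
apply: Ck_onD => //; first exact: Ck_on_coord.
apply: Ck_onN => //; apply: Ck_on_cross_approx => //; exact: chart_dom_unit.
Qed.

Lemma defining_map_eq0 x : chart_dom x ->
  tucker_set M (row_tensor x) <-> defining_map x = 0.
Proof.
move=> Dx; have [UMx _] := Dx; have x_unit := chart_dom_unit Dx.
rewrite (tucker_set_crossP M_invariant x_unit) -row_tensor_core FM_zero //.
rewrite -(cross_defect_eq0 x_unit) /defining_map.
split=> [[FM0 defect0]|/eqP].
  apply/eqP; rewrite row_mx_eq0 FM0 eqxx /=.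
  by apply/eqP/rowP => q; rewrite !mxE defect0.
rewrite row_mx_eq0 => /andP[/eqP -> /eqP /rowP defect0]; split=> // q.
by have := defect0 q; rewrite !mxE.
Qed.

Lemma rank_defining_map x : chart_dom x ->
  \rank (Defs.jacobian defining_map x) = (c + m)%N.
Proof.
move=> Dx; have [UMx _] := Dx.
have dG i : derivable defining_map x 'e_i := (smooth_defining_map [::] Dx).2 i.
apply: (rank_rowsub_triangular (rho := core_pos) (dep := enum_val)).
  rewrite -[in RHS](FM_rank UMx); congr (\rank _); apply/matrixP => a b.
  rewrite [lsubmx _ _ _]mxE [rowsub _ _ _ _]mxE jacobianE //.
  rewrite (jacobianE b ((sFM [::] UMx).2 a)).
  under [fun y => _]funext do rewrite defining_mapE_core.
  rewrite (derive_colsub core_pos (fun y => FM y ord0 b)) colsub_delta //.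
  exact: core_pos_inj.
rewrite -[rowsub _ _]hsubmxK; congr row_mx; apply/matrixP => q j.
  rewrite [lsubmx _ _ _]mxE [rowsub _ _ _ _]mxE jacobianE // mxE.
  under [fun y => _]funext do rewrite defining_mapE_core.
  rewrite (derive_colsub core_pos (fun y => FM y ord0 j)) colsub_delta0 ?derive0 // => a.
  exact: core_pos_noncross.
rewrite [rsubmx _ _ _]mxE [rowsub _ _ _ _]mxE jacobianE // mxE eq_sym.
under [fun y => _]funext do rewrite defining_mapE_dep.
exact: (derive_affine_line (cross_defect_affine j q x)).2.
Qed.

End Chart.

End DefiningMap.

Unset Implicit Arguments. Set Strict Implicit. Set Printing Implicit Defensive.

Theorem proposition2p3 (R : realType) (D : nat) (n l : 'I_D -> nat)
  (M : set (tensor R l)) :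
  (0 < D)%N ->
  (forall d, (0 < l d)%N) ->
  (forall d, (l d <= n d)%N) ->
  tucker_core_structure M ->
  is_submanifold_t (@tucker_set R D n l M).
Proof.
move=> _ _ _ [M_sub M_rank M_inv] p /= Tp.
have [rows [fibres [rows_inj cross_unit]]] := exists_invertible_cross M_inv M_rank Tp.
have M_core : M (row_tensor (colsub (core_pos rows) p)).
  by rewrite row_tensor_core; exact: ((tucker_set_crossP M_inv cross_unit).1 Tp).1.
have [c [UM [FM [oUM UMp sFM FM_rank FM_zero]]]] := M_sub _ M_core.
exists (c + #|noncross_pos rows fibres|)%N, (chart_dom rows fibres UM).
exists (defining_map rows fibres FM).
split.
- exact: open_chart_dom.
- split=> //; apply/prodf_neq0 => d _.
  by have := cross_unit d; rewrite unitmxE unitfE.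
- exact: smooth_defining_map.
- by move=> x Dx; exact: (rank_defining_map rows_inj oUM sFM FM_rank Dx).
- by move=> x Dx; exact: (defining_map_eq0 FM_zero M_inv Dx).
Qed.
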